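(* Let $T$ be a supercritical Galton–Watson tree with finite alphabet $\mathbb{A}$ and offspring distribution $W$, let $\mathscr{A}$ be a nonempty collection of nonempty subsets of $\mathbb{A}$, and let $g_{\mathscr{A}}(s)=\mathbb{P}(W^{(s)}\notin\overline{\mathscr{A}})$ for $s\in[0,1]$. If $g_{\mathscr{A}}$ has some fixed point $<1$, then almost surely, conditioned on nonextinction, there exist infinitely many $v\in T$ such that $T^v$ contains an $\mathscr{A}$-subtree.
   Context: Trees with alphabet $\mathbb{A}$ are prefix-closed subsets of $\mathbb{A}^*$ containing the empty word; $W_T(a)=\{i:ai\in T\}$; $T^v=\{j:vj\in T\}$. The Galton–Watson tree with offspring distribution $W$ (random subset of $\mathbb{A}$, $\mathbb{P}(i\in W)>0$ for all $i$) is $T_0=\{\emptyset\}$, $T_n=\{aj:a\in T_{n-1},j\in W_a\}$ with independent copies $W_a$; supercritical means $\mathbb{E}|W|>1$; nonextinction means $T_n\neq\emptyset$ for all $n$. An $\mathscr{A}$-subtree of a tree $S$ is a tree $S'\subseteq S$ with $W_{S'}(a)\in\mathscr{A}$ for all $a\in S'$. $\overline{\mathscr{A}}=\{S\subseteq\mathbb{A}:\exists X\in\mathscr{A}, X\subseteq S\}$. $W^{(s)}=W\cap Y$ with $Y$ independent, $\mathbb{P}(Y=B)=(1-s)^{|B|}s^{|\mathbb{A}\setminus B|}$. *)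

From HB Require Import structures.
From mathcomp Require Import all_boot all_order all_algebra.
From mathcomp Require Import all_classical all_reals all_analysis.
Set Implicit Arguments. Unset Strict Implicit. Unset Printing Implicit Defensive.
Import Order.TTheory GRing.Theory Num.Theory.
Local Open Scope classical_set_scope.
Local Open Scope ring_scope.

Section GW.
Variable A : finType.

(* A tree with alphabet A: prefix-closed set of words containing the empty word.
   The word "a j" (a followed by letter j) is [rcons a j]. *)
Definition is_tree (S : set (seq A)) : Prop :=
  S [::] /\ forall a j, S (rcons a j) -> S a.

Definition W_of (S : set (seq A)) (a : seq A) : set A := [set i | S (rcons a i)].

Definition subtree_at (T : set (seq A)) (v : seq A) : set (seq A) :=
  [set j | T (v ++ j)].

Definition is_Asubtree (calA : {set {set A}}) (S S' : set (seq A)) : Prop :=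
  [/\ is_tree S', S' `<=` S &
      forall a, S' a -> exists2 X, X \in calA & [set i | i \in X] = W_of S' a].

Definition upclosure (calA : {set {set A}}) : {set {set A}} :=
  [set S : {set A} | [exists X in calA, X \subset S]].

(* The Galton-Watson tree built from the offspring sets W v (v a word):
   T_0 = {[::]}, T_n = {a j : a \in T_{n-1}, j \in W a}; T = \bigcup_n T_n. *)
Definition GW_tree (Omega : Type) (W : seq A -> Omega -> {set A}) (om : Omega)
  : set (seq A) :=
  [set v | forall a j w, v = a ++ j :: w -> j \in W a om].

Definition nonextinct (Omega : Type) (W : seq A -> Omega -> {set A}) (om : Omega)
  : Prop := forall n : nat, exists v, size v = n /\ GW_tree W om v.

(* g_calA(s) = P(W^(s) \notin overline calA), W^(s) = W \cap Y with Y independent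
   of W, P(Y = C) = (1-s)^|C| s^|A \ C|, W with law p. *)
Definition gA (R : realType) (p : {set A} -> R) (calA : {set {set A}}) (s : R) : R :=
  \sum_(B : {set A}) \sum_(C : {set A})
     (if (B :&: C) \in upclosure calA then 0
      else p B * ((1 - s) ^+ #|C| * s ^+ #|~: C|)).

End GW.

From HB Require Import structures.
From mathcomp Require Import all_boot all_order all_algebra.
From mathcomp Require Import all_classical all_reals all_analysis.
From mathcomp Require Import ring lra.
Import Order.TTheory GRing.Theory Num.Theory.
Set Implicit Arguments. Unset Strict Implicit. Unset Printing Implicit Defensive.
Local Open Scope classical_set_scope.
Local Open Scope ring_scope.

(* Read the first [n] generations as a finite configuration, whose probability
   is a product of offspring probabilities. The probability [q_n] that the root
   has no calA-subtree of depth [n] satisfies [q_0 = 0] and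
   [q_(n+1) = g_calA(q_n)], so [q_n <= s] for the fixed point [s < 1], as
   [g_calA] is nondecreasing on [0, 1].
   If the tree survives but only finitely many vertices carry calA-subtrees, then
   none does, since an calA-subtree has vertices at every depth and each carries
   one. By Koenig's lemma every generation [k] is then, for some depth [N],
   nonempty and free of calA-subtrees of depth [N]. With [h] the generating
   function of [|W|], this has probability [h^k(q_N) - h^k(0)], at most
   [h^k(s) - h^k(0)]. As [h(s) <= g_calA(s) = s] and [h] is strictly convex
   by supercriticality, this tends to [0]. *)

Section Upclosure.
Variables (A : finType) (calA : {set {set A}}).

Lemma upclosureS (X Y : {set A}) :
  X \subset Y -> X \in upclosure calA -> Y \in upclosure calA.
Proof.
move=> XY; rewrite !inE => /existsP [Z /andP [ZA ZX]].
by apply/existsP; exists Z; rewrite ZA (fintype.subset_trans ZX XY).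
Qed.

Hypothesis set0_notin_calA : finset.set0 \notin calA.

Lemma set0_notin_upclosure : finset.set0 \notin upclosure calA.
Proof.
rewrite inE; apply/existsP => -[X /andP [XA]].
by rewrite finset.subset0 => /eqP X0; move: set0_notin_calA; rewrite -X0 XA.
Qed.

End Upclosure.

Section Configurations.
Variables (A : finType) (R : realType) (p : {set A} -> R).

(* A depth-[n] configuration assigns an offspring set to every word of length
   less than [n] over [A], whether or not the word lies in the tree. *)
Fixpoint conf (n : nat) : finType :=
  if n is n'.+1 then ({set A} * {ffun A -> conf n'})%type else unit.

Fixpoint weight (n : nat) : conf n -> R :=
  match n return conf n -> R with
  | 0 => fun _ => 1
  | n'.+1 => fun c => p c.1 * \prod_j weight (c.2 j)
  end.

Definition mass n (phi : pred (conf n)) := \sum_(c : conf n) weight c * (phi c)%:R.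

Definition pgf (t : R) := \sum_(B : {set A}) p B * t ^+ #|B|.

Lemma sum_weightS n (F : {set A} -> R) (G : {set A} -> A -> conf n -> R) :
  \sum_(c : conf n.+1) weight c * (F c.1 * \prod_j G c.1 j (c.2 j)) =
  \sum_B p B * F B * \prod_j \sum_(c : conf n) weight c * G B j c.
Proof.
transitivity (\sum_B \sum_(f : {ffun A -> conf n})
    weight ((B, f) : conf n.+1) * (F B * \prod_j G B j (f j))).
  by rewrite pair_bigA; apply: eq_bigr => -[].
apply: eq_bigr => B _; rewrite bigA_distr_bigA mulr_sumr; apply: eq_bigr => f _.
by rewrite /= big_split /=; ring.
Qed.

Lemma sum_weight0 : \sum_(c : conf 0) weight c = 1.
Proof. by rewrite /= (big_pred1 tt) // => -[]. Qed.

Lemma sum_weight_succ n : \sum_(c : conf n.+1) weight c =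
  (\sum_B p B) * (\sum_(c : conf n) weight c) ^+ #|A|.
Proof.
transitivity (\sum_(c : conf n.+1) weight c * (1 * \prod_(j : A) (1 : R))).
  by apply: eq_bigr => c _; rewrite big1_eq !mulr1.
rewrite (sum_weightS (fun _ => 1) (fun _ _ _ => 1)) mulr_suml; apply: eq_bigr => B _.
rewrite mulr1 -prodr_const; congr (_ * _).
by apply: eq_bigr => j _; under eq_bigr do rewrite mulr1.
Qed.

Hypothesis p_sum1 : \sum_B p B = 1.

Lemma sum_weight n : \sum_(c : conf n) weight c = 1.
Proof.
by elim: n => [|n IH]; rewrite ?sum_weight0 // sum_weight_succ IH p_sum1 expr1n mulr1.
Qed.

Lemma mass_predT n : mass (@predT (conf n)) = 1.
Proof. by rewrite -(sum_weight n); apply: eq_bigr => c _; rewrite mulr1. Qed.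

Lemma mass_negb n (phi : pred (conf n)) : mass (predC phi) = 1 - mass phi.
Proof.
rewrite -(sum_weight n) -sumrB; apply: eq_bigr => c _ /=.
by case: (phi c); rewrite /= ?mulr1 ?mulr0 ?subrr ?subr0.
Qed.

Lemma mass_sub_diff n (phi phi' : pred (conf n)) : (forall c, phi c -> phi' c) ->
  mass (fun c => phi' c && ~~ phi c) = mass phi' - mass phi.
Proof.
move=> sub; rewrite -sumrB; apply: eq_bigr => c _.
case: (boolP (phi c)) => [/sub -> | _]; first by rewrite /= mulr0 subrr.
by rewrite andbT /= mulr0 subr0.
Qed.

Lemma mass_forall n (phi : pred (conf n)) :
  mass (fun c : conf n.+1 => [forall j in c.1, phi (c.2 j)]) = pgf (mass phi).
Proof.
pose G (B : {set A}) j (c : conf n) := if j \in B then (phi c)%:R else 1 : R.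
transitivity (\sum_(c : conf n.+1) weight c * (1 * \prod_j G c.1 j (c.2 j))).
  apply: eq_bigr => -[B f] _ /=; rewrite mul1r; congr (_ * _).
  case: (boolP [forall j in B, phi (f j)]) => [/forall_inP H | ].
    by rewrite big1 // => j _; rewrite /G; case: ifP => // /H ->.
  case/forall_inPn => j jB /negbTE pj.
  by rewrite (bigD1 j) //= /G jB pj mul0r.
rewrite (sum_weightS (fun _ => 1) G); apply: eq_bigr => B _.
rewrite mulr1 (bigID (mem B)) /= [X in _ * (_ * X)]big1 ?mulr1; last first.
  by move=> j /negbTE jB; rewrite -(sum_weight n); apply: eq_bigr => c _; rewrite /G jB mulr1.
rewrite -prodr_const; congr (_ * _); apply: eq_bigr => j jB.
by apply: eq_bigr => c _; rewrite /G jB.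
Qed.

Lemma prod_if_mem (C : {set A}) (e : R) :
  \prod_j (if j \in C then e else 1 - e) = e ^+ #|C| * (1 - e) ^+ #|~: C|.
Proof.
rewrite (bigID (mem C)) /= -!prodr_const.
congr (_ * _); first by apply: eq_bigr => j ->.
by apply: eq_big => j; rewrite ?inE // => /negbTE ->.
Qed.

Hypothesis p_ge0 : forall B, 0 <= p B.

Lemma weight_ge0 n (c : conf n) : 0 <= weight c.
Proof. by elim: n c => //= n IH c; rewrite mulr_ge0 ?prodr_ge0. Qed.

Lemma mass_ge0 n (phi : pred (conf n)) : 0 <= mass phi.
Proof. by apply: sumr_ge0 => c _; rewrite mulr_ge0 ?weight_ge0. Qed.

Lemma mass_le1 n (phi : pred (conf n)) : mass phi <= 1.
Proof. by rewrite -subr_ge0 -mass_negb mass_ge0. Qed.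

Variable calA : {set {set A}}.

(* [Agood c]: the configuration [c] has an [calA]-subtree of depth [n] at the root. *)
Fixpoint Agood (n : nat) : pred (conf n) :=
  match n return pred (conf n) with
  | 0 => predT
  | n'.+1 => fun c => [set j in c.1 | Agood (c.2 j)] \in upclosure calA
  end.
Arguments Agood : clear implicits.

Lemma indicator_notin_upclosure (B : {set A}) (phi : A -> bool) :
  ([set j in B | phi j] \notin upclosure calA)%:R =
  \sum_(C : {set A}) ((B :&: C) \notin upclosure calA)%:R *
                     \prod_j (phi j == (j \in C))%:R :> R.
Proof.
rewrite (bigD1 [set j | phi j]%SET) //= [X in _ + X]big1 ?addr0; last first.
  move=> C /eqP neC; case: (boolP [forall j, phi j == (j \in C)]).
    by move=> /forallP eqC; case: neC; apply/setP => j; rewrite inE (eqP (eqC j)).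
  by case/forallPn => j /negbTE phij; rewrite (bigD1 j) //= phij mul0r mulr0.
rewrite big1 ?mulr1 => [|j _]; last by rewrite inE eqxx.
by have -> : B :&: [set j | phi j] = [set j in B | phi j] by apply/setP => j; rewrite !inE.
Qed.

Lemma mass_notAgood n :
  mass (predC (Agood n.+1)) = gA p calA (1 - mass (Agood n)).
Proof.
transitivity (\sum_(c : conf n.+1) \sum_(C : {set A}) weight c *
   (((c.1 :&: C) \notin upclosure calA)%:R *
    \prod_j (Agood _ (c.2 j) == (j \in C))%:R)).
  by apply: eq_bigr => -[B f] _; rewrite /= indicator_notin_upclosure mulr_sumr.
rewrite exchange_big /gA [RHS]exchange_big; apply: eq_bigr => C _ /=.
rewrite (sum_weightS (fun B => ((B :&: C) \notin upclosure calA)%:R)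
                    (fun B j c => (Agood _ c == (j \in C))%:R)).
apply: eq_bigr => B _.
rewrite (eq_bigr (fun j => if j \in C then mass (Agood n) else 1 - mass (Agood n)));
  last first.
  move=> j _; case: (j \in C); first by apply: eq_bigr => c _; rewrite eqb_id.
  by rewrite -mass_negb; apply: eq_bigr => c _; rewrite eqbF_neg.
rewrite prod_if_mem subKr.
by case: (B :&: C \in upclosure calA); rewrite /= ?mulr0 ?mul0r ?mulr1.
Qed.

End Configurations.
Arguments Agood {A} calA n.

Lemma sum_set_prod (A : finType) (R : comPzSemiRingType) (F : A -> bool -> R) :
  \sum_(C : {set A}) \prod_j F j (j \in C) = \prod_j (F j true + F j false).
Proof.
under [RHS]eq_bigr do rewrite -big_bool.
rewrite bigA_distr_bigA (reindex (fun C : {set A} => [ffun j => j \in C])) /=.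
  by apply: eq_bigr => C _; apply: eq_bigr => j _; rewrite ffunE.
exists (fun f : {ffun A -> bool} => [set j | f j]%SET) => [C _ | f _].
  by apply/setP => j; rewrite inE ffunE.
by apply/ffunP => j; rewrite !ffunE inE.
Qed.

Section DecreasingSetFunction.
Variables (A : finType) (R : realType) (psi : {set A} -> R).
Hypothesis psi_decr : forall C i, psi (i |: C) <= psi C.

(* The mean of [psi Y] for a random set [Y] that contains each [j]
   independently with probability [1 - sigma j]. *)
Definition subset_mean (sigma : A -> R) :=
  \sum_(C : {set A}) psi C * \prod_j (if j \in C then 1 - sigma j else sigma j).

Lemma sum_set_split (F : {set A} -> R) (i : A) :
  \sum_(C : {set A}) F C = \sum_(C : {set A} | i \notin C) (F C + F (i |: C)).
Proof.
rewrite big_split /= [LHS](bigID (fun C : {set A} => i \notin C)) /=; congr (_ + _).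
rewrite (reindex_onto (fun C : {set A} => i |: C) (fun C : {set A} => C :\ i)) /=.
  apply: eq_bigl => C; rewrite setU11 /=; apply/eqP/idP => [<- | /finset.setU1K //].
  by rewrite !inE eqxx.
by move=> C; rewrite negbK => iC; rewrite finset.setD1K.
Qed.

Lemma subset_mean_le1 (sigma sigma' : A -> R) (i : A) :
  (forall j, j != i -> sigma j = sigma' j) -> (forall j, 0 <= sigma j <= 1) ->
  sigma i <= sigma' i -> subset_mean sigma <= subset_mean sigma'.
Proof.
move=> eq_sigma sigma01 le_i.
rewrite /subset_mean (sum_set_split _ i) [leRHS](sum_set_split _ i).
apply: ler_sum => C iC.
set Q := \prod_(j | j != i) (if j \in C then 1 - sigma j else sigma j).
have Q_ge0 : 0 <= Q.
  apply: prodr_ge0 => j _; have /andP [s0 s1] := sigma01 j.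
  by case: (j \in C); rewrite ?subr_ge0.
have prodC s : (forall j, j != i -> s j = sigma j) ->
    \prod_j (if j \in C then 1 - s j else s j) = s i * Q.
  move=> eq_s; rewrite (bigD1 i) //= (negbTE iC); congr (_ * _).
  by apply: eq_bigr => j ji; rewrite eq_s.
have prodiC s : (forall j, j != i -> s j = sigma j) ->
    \prod_j (if j \in i |: C then 1 - s j else s j) = (1 - s i) * Q.
  move=> eq_s; rewrite (bigD1 i) //= setU11; congr (_ * _).
  by apply: eq_bigr => j ji; rewrite in_setU1 (negbTE ji) /= eq_s.
rewrite !prodC ?prodiC // => [|j ji|j ji]; try by rewrite eq_sigma.
have := psi_decr C i; set a := psi C; set b := psi (i |: C) => le_ba.
rewrite -subr_ge0 (_ : _ - _ = (sigma' i - sigma i) * Q * (a - b)); last by ring.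
by rewrite !mulr_ge0 // subr_ge0.
Qed.

Lemma subset_mean_le (s t : R) : 0 <= s -> s <= t -> t <= 1 ->
  subset_mean (fun _ => s) <= subset_mean (fun _ => t).
Proof.
move=> s0 st t1.
pose sigma (l : seq A) j := if j \in l then t else s.
have -> : (fun _ => t) = sigma (enum A) by apply: funext => j; rewrite /sigma mem_enum.
elim: (enum A) => [|i l IH] //; apply: (le_trans IH).
apply: (@subset_mean_le1 _ _ i).
- by move=> j ji; rewrite /sigma in_cons (negbTE ji).
- move=> j; rewrite /sigma; case: ifP => _; apply/andP; split => //.
    exact: le_trans st.
  exact: le_trans t1.
- by rewrite /sigma mem_head; case: ifP.
Qed.

End DecreasingSetFunction.

Section OffspringFixpoint.
Variables (A : finType) (R : realType) (p : {set A} -> R) (calA : {set {set A}}).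
Hypothesis p_ge0 : forall B, 0 <= p B.

Lemma gAE (s : R) : gA p calA s =
  \sum_B p B * subset_mean (fun C => ((B :&: C) \notin upclosure calA)%:R) (fun _ => s).
Proof.
apply: eq_bigr => B _; rewrite mulr_sumr; apply: eq_bigr => C _.
have := prod_if_mem C (1 - s); rewrite subKr => ->.
by case: (B :&: C \in upclosure calA); rewrite /= ?mul0r ?mulr0 ?mul1r.
Qed.

Lemma gA_le (s t : R) : 0 <= s -> s <= t -> t <= 1 -> gA p calA s <= gA p calA t.
Proof.
move=> s0 st t1; rewrite !gAE; apply: ler_sum => B _.
apply: ler_wpM2l => //; apply: subset_mean_le => // C i.
case: (boolP (B :&: (i |: C) \in upclosure calA)) => [_ | notup] /=.
  by case: (_ \in _).
suff -> : (B :&: C \in upclosure calA) = false by [].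
apply/negbTE; apply: contra notup; apply: upclosureS.
by apply: finset.setIS; apply: finset.subsetUr.
Qed.

Hypothesis set0_notin_calA : finset.set0 \notin calA.

(* [pgf p s] is the probability that [W^(s)] is empty, which forces
   [W^(s)] outside [upclosure calA]. *)
Lemma pgf_le_gA (s : R) : 0 <= s -> s <= 1 -> pgf p s <= gA p calA s.
Proof.
move=> s0 s1; rewrite gAE; apply: ler_sum => B _; apply: ler_wpM2l => //.
pose F j (b : bool) := if b then (j \notin B)%:R * (1 - s) else s.
have -> : s ^+ #|B| = \sum_(C : {set A}) \prod_j F j (j \in C).
  rewrite sum_set_prod [RHS](bigID (mem B)) /= [X in _ * X]big1 => [|j /negbTE jB].
    by rewrite mulr1 -prodr_const; apply: eq_bigr => j jB; rewrite /F jB mul0r add0r.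
  by rewrite /F jB mul1r subrK.
apply: ler_sum => C _; have [BC0 | ] := eqVneq (B :&: C) finset.set0.
  rewrite BC0 (negbTE (set0_notin_upclosure set0_notin_calA)) mul1r; apply: ler_prod => j _.
  rewrite /F; case: ifP => jC; last by rewrite s0 lexx.
  have -> : j \notin B by apply/negP => jB; have := finset.in_set0 j; rewrite -BC0 inE jB jC.
  by rewrite mul1r subr_ge0 s1 lexx.
case/finset.set0Pn => j; rewrite inE => /andP [jB jC].
rewrite (bigD1 j) //= /F jC jB mul0r mul0r.
apply: mulr_ge0 => //; apply: prodr_ge0 => k _; case: ifP => _; rewrite ?subr_ge0 //.
Qed.

End OffspringFixpoint.

Section GeneratingFunction.
Variables (A : finType) (R : realType) (p : {set A} -> R).
Hypotheses (p_ge0 : forall B, 0 <= p B) (p_sum1 : \sum_B p B = 1).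

Local Notation h := (pgf p).

Lemma pgf1 : h 1 = 1.
Proof. by rewrite -[RHS]p_sum1; apply: eq_bigr => B _; rewrite expr1n mulr1. Qed.

Lemma pgf_ge0 x : 0 <= x -> 0 <= h x.
Proof. by move=> x0; apply: sumr_ge0 => B _; rewrite mulr_ge0 ?exprn_ge0. Qed.

Lemma pgf_le x y : 0 <= x -> x <= y -> h x <= h y.
Proof.
move=> x0 xy; apply: ler_sum => B _; apply: ler_wpM2l => //.
by apply: lerXn2r; rewrite // nnegrE (le_trans x0 xy).
Qed.

Lemma iter_pgf_ge0 k x : 0 <= x -> 0 <= iter k h x.
Proof. by move=> x0; elim: k => //= k; apply: pgf_ge0. Qed.

Lemma iter_pgf_le k x y : 0 <= x -> x <= y -> iter k h x <= iter k h y.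
Proof. by move=> x0 xy; elim: k => //= k; apply: pgf_le; apply: iter_pgf_ge0. Qed.

Definition pgf_slope (a b : R) :=
  \sum_(B : {set A}) p B * \sum_(i < #|B|) b ^+ (#|B|.-1 - i) * a ^+ i.

Lemma pgf_sub a b : h b - h a = (b - a) * pgf_slope a b.
Proof.
rewrite -sumrB mulr_sumr; apply: eq_bigr => B _.
by rewrite -mulrBr subrXX mulrCA.
Qed.

Variable B0 : {set A}.
Hypotheses (pB0 : 0 < p B0) (cardB0 : (1 < #|B0|)%N).

(* Strict convexity of [h], quantified by the offspring set [B0]. *)
Lemma pgf_slope_gap a b s : 0 <= a -> a <= b -> b <= s -> s < 1 ->
  pgf_slope a b <= pgf_slope b 1 - p B0 * (1 - s).
Proof.
move=> a0 ab bs s1.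
have b0 : 0 <= b := le_trans a0 ab.
have b1 : b <= 1 := le_trans bs (ltW s1).
have term (B : {set A}) (i : 'I_#|B|) :
    0 <= 1 ^+ (#|B|.-1 - i) * b ^+ i - b ^+ (#|B|.-1 - i) * a ^+ i.
  rewrite expr1n mul1r subr_ge0 -[leRHS]mul1r.
  by apply: ler_pM; rewrite ?exprn_ge0 ?exprn_ile1 ?lerXn2r ?nnegrE.
rewrite lerBrDr -lerBrDl /pgf_slope -sumrB (bigD1 B0) //= -mulrBr -sumrB.
rewrite -[leLHS]addr0; apply: lerD; last first.
  apply: sumr_ge0 => B _; rewrite -mulrBr -sumrB mulr_ge0 //.
  by apply: sumr_ge0 => i _; apply: term.
apply: ler_wpM2l; first exact: ltW.
have card_gt0 : (0 < #|B0|)%N := ltnW cardB0.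
rewrite (bigD1 (Ordinal card_gt0)) //= -[leLHS]addr0; apply: lerD; last first.
  by apply: sumr_ge0 => i _; apply: term.
rewrite !expr0 !mulr1 expr1n subn0 lerB // (le_trans _ bs) //.
by rewrite -[leRHS]expr1; apply: ler_wiXn2l => //; case: #|B0| cardB0 => [|[]].
Qed.

Lemma pgf_contract a b s : 0 <= a -> a <= b -> b <= s -> s < 1 -> h b <= b ->
  (1 - s) * (h b - h a) <= (1 - s) * (1 - p B0 * (1 - s)) * (b - a) + (b - h b).
Proof.
move=> a0 ab bs s1 hbb.
have b1 : 0 < 1 - b by rewrite subr_gt0 (le_lt_trans bs s1).
have gap := pgf_slope_gap a0 ab bs s1.
have eD : h b - h a = (b - a) * pgf_slope a b := pgf_sub a b.
have eD1 : 1 - h b = (1 - b) * pgf_slope b 1 by rewrite -[in LHS]pgf1 pgf_sub.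
set D := pgf_slope a b in gap eD; set D1 := pgf_slope b 1 in gap eD1.
set kappa := p B0 * (1 - s) in gap *.
(* from [(1 - b) D1 = 1 - h b], with [(1 - s) (b - a) <= 1 - b] *)
have D1_le : (1 - s) * (b - a) * D1 <= (1 - s) * (b - a) + (b - h b).
  rewrite -(ler_pM2l b1).
  have : (1 - s) * (b - a) <= 1 - b by nra.
  nra.
have sba : 0 <= (1 - s) * (b - a) by rewrite mulr_ge0 // subr_ge0 // ltW.
have := ler_wpM2l sba gap; rewrite eD; nra.
Qed.

(* The potential [(1 - s) (y_k - x_k) + y_k], with [x_k = h^k 0] and
   [y_k = h^k s], decreases by at least a fixed multiple of [y_k - x_k]. *)
Lemma iter_pgf_gap_vanish s M : 0 <= s -> s < 1 -> h s <= s ->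
  (forall k, M <= iter k h s - iter k h 0) -> M <= 0.
Proof.
move=> s0 s1 hs HM; rewrite leNgt; apply/negP => M0.
pose x k := iter k h 0; pose y k := iter k h s.
have x0 k : 0 <= x k := iter_pgf_ge0 k (lexx 0).
have xy k : x k <= y k := iter_pgf_le k (lexx 0) s0.
have yS k : y k.+1 <= y k by rewrite /y iterSr; apply: iter_pgf_le; rewrite ?pgf_ge0.
have ys k : y k <= s by elim: k => // k IH; apply: le_trans (yS k) IH.
pose c := (1 - s) * (p B0 * (1 - s)).
have c0 : 0 < c by rewrite !mulr_gt0 // subr_gt0.
pose Phi k := (1 - s) * (y k - x k) + y k.
have Phi_step k : Phi k.+1 + c * M <= Phi k.
  have := pgf_contract (x0 k) (xy k) (ys k) s1 (yS k).
  have := ler_wpM2l (ltW c0) (HM k).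
  rewrite /Phi /c -/(x k) -/(y k) /= -/(x k.+1) -/(y k.+1); nra.
have Phi_ge0 k : 0 <= Phi k.
  by rewrite addr_ge0 ?mulr_ge0 ?subr_ge0 ?xy ?(ltW s1) ?(le_trans (x0 k) (xy k)).
have Phi_bound K : K%:R * (c * M) <= Phi 0%N.
  suff : Phi K + K%:R * (c * M) <= Phi 0%N by have := Phi_ge0 K; lra.
  elim: K => [|K IH]; first by rewrite mul0r addr0.
  by apply: le_trans IH; have := Phi_step K; rewrite -natr1 mulrDl mul1r; lra.
have cM0 : 0 < c * M := mulr_gt0 c0 M0.
have := archi_boundP (divr_ge0 (Phi_ge0 0%N) (ltW cM0)).
rewrite ltr_pdivrMr // => /lt_le_trans /(_ (Phi_bound _)).
by rewrite ltxx.
Qed.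

End GeneratingFunction.

Section Levels.
Variable A : finType.

(* [at_level phi k c]: in the configuration [c], every vertex of generation
   [k] of the tree has a subconfiguration satisfying [phi]. *)
Fixpoint at_level N (phi : pred (conf A N)) (k : nat) : pred (conf A (k + N)) :=
  match k return pred (conf A (k + N)) with
  | 0 => phi
  | k'.+1 => fun c => [forall j in c.1, @at_level N phi k' (c.2 j)]
  end.
Arguments at_level {N} phi k.

Lemma at_level_sub N (phi phi' : pred (conf A N)) k c :
  (forall c, phi c -> phi' c) -> at_level phi k c -> at_level phi' k c.
Proof.
move=> sub; elim: k c => [|k IH] c /=; first exact: sub.
by move=> /forall_inP H; apply/forall_inP => j /H /IH.
Qed.

Variable calA : {set {set A}}.

(* [~~ at_level pred0 k c]: generation [k] is not empty. *)
Definition bad_generation N k : pred (conf A (k + N)) := fun c =>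
  at_level (predC (Agood calA N)) k c && ~~ at_level (@pred0 (conf A N)) k c.
Arguments bad_generation : clear implicits.

Variables (R : realType) (p : {set A} -> R).
Hypotheses (p_ge0 : forall B, 0 <= p B) (p_sum1 : \sum_B p B = 1).

Lemma mass_at_level N (phi : pred (conf A N)) k :
  mass p (at_level phi k) = iter k (pgf p) (mass p phi).
Proof. by elim: k => //= k <-; rewrite -mass_forall. Qed.

Lemma mass_notAgood_le s : 0 <= s -> s < 1 -> gA p calA s = s ->
  forall n, 1 - mass p (Agood calA n) <= s.
Proof.
move=> s0 s1 gs; elim=> [|n IH]; first by rewrite (mass_predT p_sum1) subrr.
rewrite -(mass_negb p_sum1) (mass_notAgood p_sum1) -[leRHS]gs.
by apply: gA_le => //; rewrite ?subr_ge0 ?mass_le1 // ltW.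
Qed.

Lemma mass_bad_generation s : 0 <= s -> s < 1 -> gA p calA s = s -> forall N k,
  mass p (bad_generation N k) <= iter k (pgf p) s - iter k (pgf p) 0.
Proof.
move=> s0 s1 gs N k; rewrite mass_sub_diff; last by move=> c; apply: at_level_sub.
rewrite !mass_at_level (mass_negb p_sum1).
have -> : mass p (@pred0 (conf A N)) = 0 by apply: big1 => c _; rewrite mulr0.
apply: lerB => //; apply: iter_pgf_le => //.
- by rewrite subr_ge0 mass_le1.
- exact: mass_notAgood_le.
Qed.

End Levels.
Arguments at_level {A N} phi k.
Arguments bad_generation {A} calA N k.

Section ConfigurationAt.
Variables (A : finType) (Omega : Type) (W : seq A -> Omega -> {set A}).

Fixpoint conf_at (om : Omega) (v : seq A) (n : nat) : conf A n :=
  match n return conf A n with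
  | 0 => tt
  | n'.+1 => (W v om, [ffun j => conf_at om (rcons v j) n'])
  end.

(* The words of length less than [n], in the order in which a depth-[n]
   configuration lists their offspring sets. *)
Fixpoint words (n : nat) : seq (seq A) :=
  if n is n'.+1 then [::] :: [seq j :: r | j <- enum A, r <- words n'] else [::].

Fixpoint conf_label (n : nat) : conf A n -> seq A -> {set A} :=
  match n return conf A n -> seq A -> {set A} with
  | 0 => fun _ _ => finset.set0
  | n'.+1 => fun c r => if r is j :: r' then conf_label (c.2 j) r' else c.1
  end.

Lemma words_uniq n : uniq (words n).
Proof.
elim: n => //= n IH; rewrite allpairs_uniq ?enum_uniq //; last first.
  by move=> [j1 r1] [j2 r2] _ _ /= [-> ->].
by rewrite andbT; apply/allpairsP => -[[j r] []].
Qed.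

Lemma conf_atP om v n (c : conf A n) :
  conf_at om v n = c <-> forall r, r \in words n -> W (v ++ r) om = conf_label c r.
Proof.
elim: n v c => [|n IH] v c /=; first by case: c.
case: c => B f /=; split.
  move=> [<- <-] r; rewrite in_cons => /predU1P [-> | ]; first by rewrite cats0.
  case/allpairsP => -[j r'] [_ r'_in ->] /=.
  by rewrite ffunE -cat_rcons; apply: (IH _ _).1 r'_in.
move=> H; congr pair; first by rewrite -(H [::]) ?mem_head ?cats0.
apply/ffunP => j; rewrite ffunE; apply/IH => r r_in.
rewrite cat_rcons; apply: (H (j :: r)); rewrite in_cons; apply/orP; right.
by apply: (allpairs_f (fun j r => j :: r)); rewrite ?mem_enum.
Qed.

End ConfigurationAt.

Section ConfigurationLaw.
Variables (d : measure_display) (Omega : measurableType d) (R : realType).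
Variables (P : probability Omega R) (A : finType) (p : {set A} -> R).
Variable W : seq A -> Omega -> {set A}.
Hypothesis W_meas : forall v B, measurable [set om | W v om = B].
Hypothesis W_iid : forall (vs : seq (seq A)) (Bs : seq A -> {set A}), uniq vs ->
  P (\big[setI/setT]_(v <- vs) [set om | W v om = Bs v])
  = ((\prod_(v <- vs) p (Bs v))%:E).

Lemma conf_at_eq_bigI n (c : conf A n) :
  [set om | conf_at W om [::] n = c] =
  \big[setI/setT]_(r <- words A n) [set om | W r om = conf_label c r].
Proof.
rewrite -bigcap_seq; apply/seteqP; split => om /=.
  by move=> /conf_atP H r /H.
by move=> H; apply/conf_atP => r /H.
Qed.

Lemma measurable_conf_at n (c : conf A n) :
  measurable [set om | conf_at W om [::] n = c].
Proof. by rewrite conf_at_eq_bigI; apply: bigsetI_measurable. Qed.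

Lemma prod_conf_label n (c : conf A n) :
  \prod_(r <- words A n) p (conf_label c r) = weight p c.
Proof.
elim: n c => [|n IH] c /=; first by rewrite big_nil.
rewrite big_cons big_allpairs_dep /= big_enum /=.
by congr (_ * _); apply: eq_bigr => j _; apply: IH.
Qed.

Lemma P_conf_at n (c : conf A n) :
  P [set om | conf_at W om [::] n = c] = (weight p c)%:E.
Proof. by rewrite conf_at_eq_bigI W_iid ?words_uniq // prod_conf_label. Qed.

Lemma P_conf_at_mem n (s : seq (conf A n)) : uniq s ->
  measurable [set om | conf_at W om [::] n \in s] /\
  P [set om | conf_at W om [::] n \in s] = (\sum_(c <- s) weight p c)%:E.
Proof.
elim: s => [|c s IH] /=.
  rewrite big_nil (_ : [set om | _ \in [::]] = set0) ?measure0 //.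
  by apply/seteqP; split => om.
case/andP => c_notin_s /IH [ms Ps].
have -> : [set om | conf_at W om [::] n \in c :: s] =
    [set om | conf_at W om [::] n = c] `|` [set om | conf_at W om [::] n \in s].
  apply/seteqP; split => om /=; rewrite in_cons; first by case/predU1P; [left | right].
  by case=> [-> | ->]; rewrite ?eqxx ?orbT.
have mc := measurable_conf_at c.
split; first exact: measurableU.
have disj : [set om | conf_at W om [::] n = c] `&` [set om | conf_at W om [::] n \in s] = set0.
  by apply/seteqP; split => om //= -[-> c_in_s]; rewrite c_in_s in c_notin_s.
by rewrite (measureU P mc ms disj) /= Ps P_conf_at big_cons EFinD.
Qed.

Lemma P_conf_at_pred n (phi : pred (conf A n)) :
  measurable [set om | phi (conf_at W om [::] n)] /\
  P [set om | phi (conf_at W om [::] n)] = (mass p phi)%:E.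
Proof.
have [m_phi P_phi] := P_conf_at_mem (enum_uniq phi).
have -> : [set om | phi (conf_at W om [::] n)] = [set om | conf_at W om [::] n \in enum phi].
  by apply/seteqP; split => om /=; rewrite mem_enum.
split => //; rewrite P_phi big_enum /= big_mkcond /=; congr EFin.
by apply: eq_bigr => c _; rewrite unfold_in; case: (phi c); rewrite ?mulr1 ?mulr0.
Qed.

Lemma offspring_law_ge0 B : 0 <= p B.
Proof.
have := @W_iid [:: [::]] (fun _ => B) erefl.
by rewrite !big_seq1 -lee_fin => <-; apply: measure_ge0.
Qed.

Lemma offspring_law_sum1 : \sum_B p B = 1.
Proof.
have [_] := P_conf_at_pred (@predT (conf A 1)).
rewrite (_ : [set om | _] = setT) ?probability_setT; last by apply/seteqP.
move=> [/esym]; rewrite /mass; under eq_bigr do rewrite mulr1.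
by rewrite sum_weight_succ sum_weight0 expr1n mulr1.
Qed.

End ConfigurationLaw.

Section GaltonWatsonTree.
Variables (A : finType) (Omega : Type) (W : seq A -> Omega -> {set A}) (om : Omega).
Local Notation T := (GW_tree W om).

Lemma GW_nil : T [::].
Proof. by case. Qed.

Lemma GW_rcons a j : T (rcons a j) <-> T a /\ j \in W a om.
Proof.
split=> [Taj | [Ta jW] a' j' w].
  split; last by apply: (Taj a j [::]); rewrite cats1.
  move=> a' j' w' ea; apply: (Taj a' j' (rcons w' j)).
  by rewrite ea rcons_cat rcons_cons.
case/lastP: w => [|w x].
  by rewrite cats1 => /rcons_inj [<- <-].
by rewrite -rcons_cons -rcons_cat => /rcons_inj [/Ta].
Qed.

Lemma GW_is_tree : is_tree T.
Proof. by split=> [|a j /GW_rcons []]; first exact: GW_nil. Qed.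

Lemma W_of_GW a : T a -> W_of T a = [set i | i \in W a om].
Proof. by move=> Ta; apply/seteqP; split => i /= => [/GW_rcons [] | jW]; last exact/GW_rcons. Qed.

End GaltonWatsonTree.

Section Asubtrees.
Variables (A : finType) (calA : {set {set A}}).
Hypothesis set0_notin_calA : finset.set0 \notin calA.

Lemma Asubtree_shift (S S' : set (seq A)) u :
  is_Asubtree calA S S' -> S' u ->
  is_Asubtree calA [set r | S (u ++ r)] [set r | S' (u ++ r)].
Proof.
case=> -[S'0 S'_prefix] S'S S'_calA S'u; split.
- by split=> [|a j /=]; [rewrite /= cats0 | rewrite -rcons_cat => /S'_prefix].
- by move=> r /S'S.
- move=> a /S'_calA [X XA W_of_ua]; exists X => //; rewrite W_of_ua.
  by apply/seteqP; split => i; rewrite /W_of /= rcons_cat.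
Qed.

Lemma Asubtree_size (S S' : set (seq A)) n :
  is_Asubtree calA S S' -> exists2 u, S' u & size u = n.
Proof.
case=> -[S'0 _] _ S'_calA; elim: n => [|n [u S'u <-]]; first by exists [::].
have [X XA W_of_u] := S'_calA u S'u.
have /finset.set0Pn [i iX] : X != finset.set0.
  by apply: contraNneq set0_notin_calA => <-.
exists (rcons u i); last by rewrite size_rcons.
by have : [set i | i \in X] i by []; rewrite W_of_u.
Qed.

(* An [calA]-subtree has vertices at every depth, and each of them carries
   an [calA]-subtree of its own. *)
Lemma infinite_Asubtree_roots (S : set (seq A)) v S' :
  S v -> is_Asubtree calA (subtree_at S v) S' ->
  infinite_set [set w | S w /\ exists S'', is_Asubtree calA (subtree_at S w) S''].
Proof.
move=> Sv AS' /finite_seqP [s Hs].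
have [u S'u size_u] := Asubtree_size (\max_(x <- s) size x).+1 AS'.
have : [set w | S w /\ exists S'', is_Asubtree calA (subtree_at S w) S''] (v ++ u).
  split; first by case: AS' => _ /(_ u S'u).
  exists [set r | S' (u ++ r)].
  have -> : subtree_at S (v ++ u) = [set r | subtree_at S v (u ++ r)].
    by apply/seteqP; split => r; rewrite /subtree_at /= catA.
  exact: Asubtree_shift.
rewrite Hs /= => /(@leq_bigmax_seq _ s xpredT size) /(_ erefl).
by rewrite size_cat size_u leqNgt ltn_addl.
Qed.

End Asubtrees.

Section GoodVertices.
Variables (A : finType) (Omega : Type) (W : seq A -> Omega -> {set A}) (om : Omega).
Variable calA : {set {set A}}.
Local Notation T := (GW_tree W om).
Local Notation cf := (conf_at W om).

Lemma Agood_conf_atS v N : Agood calA N.+1 (cf v N.+1) =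
  ([set j in W v om | Agood calA N (cf (rcons v j) N)] \in upclosure calA).
Proof. by rewrite /=; under eq_finset do rewrite ffunE. Qed.

Lemma Agood_conf_at_le v N M :
  (N <= M)%N -> Agood calA M (cf v M) -> Agood calA N (cf v N).
Proof.
elim: N v M => [|N IH] v [|M] // NM.
rewrite !Agood_conf_atS; apply: upclosureS; apply/fintype.subsetP => j.
by rewrite !inE => /andP [-> /IH]; apply.
Qed.

Definition good v := forall N, Agood calA N (cf v N).

(* Koenig's lemma: as [A] is finite, one depth [N] witnesses the badness of
   all bad children of [v] at once. *)
Lemma good_children v :
  good v -> [set j in W v om | `[< good (rcons v j) >]] \in upclosure calA.
Proof.
move=> gv.
have /choice [f Hf] : forall j, exists N,
    ~ good (rcons v j) -> ~~ Agood calA N (cf (rcons v j) N).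
  move=> j; case: (pselect (good (rcons v j))) => [gj | /existsNP [N /negP bad]].
    by exists 0%N.
  by exists N.
have := gv (\max_j f j).+1; rewrite Agood_conf_atS; apply: upclosureS.
apply/fintype.subsetP => j; rewrite !inE => /andP [-> good_j] /=.
apply/asboolP; apply: contrapT => /Hf /negP; apply.
by apply: Agood_conf_at_le good_j; apply: leq_bigmax.
Qed.

Lemma Asubtree_of_good v :
  T v -> good v -> exists S', is_Asubtree calA (subtree_at T v) S'.
Proof.
move=> Tv gv.
pose X a := odflt finset.set0
  [pick X in calA | X \subset [set j in W (v ++ a) om | `[< good (rcons (v ++ a) j) >]]].
have XP a : good (v ++ a) -> X a \in calA /\
    X a \subset [set j in W (v ++ a) om | `[< good (rcons (v ++ a) j) >]].
  move=> /good_children; rewrite inE => /existsP [Y /andP [YA Ysub]].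
  by rewrite /X; case: pickP => [Z /andP [] | /(_ Y)] //; rewrite YA Ysub.
pose S' := GW_tree (fun a (_ : unit) => X a) tt.
have S'_good r : S' r -> good (v ++ r) /\ T (v ++ r).
  elim/last_ind: r => [|a j IH]; first by rewrite cats0.
  case/GW_rcons => /IH [ga Ta] jX; have [_ /fintype.subsetP /(_ j jX)] := XP a ga.
  by rewrite inE -rcons_cat => /andP [jW /asboolP gj]; split => //; apply/GW_rcons.
exists S'; split.
- exact: GW_is_tree.
- by move=> r /S'_good [].
- move=> a S'a; exists (X a); first by have [/XP []] := S'_good a S'a.
  by rewrite W_of_GW.
Qed.

Lemma at_level_conf_atS N (phi : pred (conf A N)) k v :
  at_level phi k.+1 (cf v (k.+1 + N)) =
  [forall j in W v om, at_level phi k (cf (rcons v j) (k + N))].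
Proof. by apply: eq_forallb => j; rewrite ffunE. Qed.

Lemma at_level_conf_at_le N M (phi : pred (conf A N)) (phi' : pred (conf A M)) k v :
  (forall w, phi (cf w N) -> phi' (cf w M)) ->
  at_level phi k (cf v (k + N)) -> at_level phi' k (cf v (k + M)).
Proof.
move=> sub; elim: k v => [|k IH] v; first exact: sub.
by rewrite !at_level_conf_atS => /forall_inP H; apply/forall_inP => j /H /IH.
Qed.

Lemma bad_level_exists k v :
  (forall w, T w -> exists N, ~~ Agood calA N (cf w N)) -> T v ->
  exists N, at_level (predC (Agood calA N)) k (cf v (k + N)).
Proof.
move=> all_bad; elim: k v => [|k IH] v Tv; first exact: all_bad.
have /choice [f Hf] : forall j, exists N, j \in W v om ->
    at_level (predC (Agood calA N)) k (cf (rcons v j) (k + N)).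
  move=> j; case: (boolP (j \in W v om)) => jW; last by exists 0%N.
  by have [N HN] := IH (rcons v j) (proj2 (GW_rcons _ _ _ _) (conj Tv jW)); exists N.
exists (\max_j f j); rewrite at_level_conf_atS; apply/forall_inP => j /Hf.
apply: at_level_conf_at_le => w /=; apply: contra.
exact/Agood_conf_at_le/leq_bigmax.
Qed.

Lemma not_extinct_level N u v :
  T (v ++ u) -> ~~ at_level (@pred0 (conf A N)) (size u) (cf v (size u + N)).
Proof.
elim: u v => [|j u IH] v // Tvu; rewrite [size _]/= at_level_conf_atS.
apply/forall_inP => /(_ j (Tvu v j u erefl)); apply/negP.
by apply: IH; rewrite cat_rcons.
Qed.

Hypothesis set0_notin_calA : finset.set0 \notin calA.

Lemma bad_generation_conf_atS N k v :
  bad_generation calA N k (cf v (k + N)) -> bad_generation calA N.+1 k (cf v (k + N.+1)).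
Proof.
case/andP=> bad alive; apply/andP; split.
  by apply: at_level_conf_at_le bad => w; apply: contra; apply: Agood_conf_at_le.
by apply: contra alive; apply: at_level_conf_at_le.
Qed.

Lemma bad_generation_of_finitely_many_Asubtrees : nonextinct W om ->
  ~ infinite_set [set v | T v /\ exists S', is_Asubtree calA (subtree_at T v) S'] ->
  forall k, exists N, bad_generation calA N k (cf [::] (k + N)).
Proof.
move=> nonext fin k.
have [N bad] : exists N, at_level (predC (Agood calA N)) k (cf [::] (k + N)).
  apply: bad_level_exists (GW_nil W om) => w Tw; apply: contrapT => all_good.
  have [S' AS'] : exists S', is_Asubtree calA (subtree_at T w) S'.
    apply: Asubtree_of_good => // N.
    by apply: contrapT => /negP bad; apply: all_good; exists N.
  exact/fin/(infinite_Asubtree_roots set0_notin_calA Tw AS').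
exists N; apply/andP; split => //.
by have [u [<- Tu]] := nonext k; apply: not_extinct_level.
Qed.

End GoodVertices.

Lemma supercritical_offspring_set (A : finType) (R : realType) (p : {set A} -> R) :
  (forall B, 0 <= p B) -> \sum_B p B = 1 -> 1 < \sum_B p B * #|B|%:R ->
  exists2 B0 : {set A}, 0 < p B0 & (1 < #|B0|)%N.
Proof.
move=> p_ge0 p_sum1 supercrit; apply: contrapT => no_B0.
suff : \sum_B p B * #|B|%:R <= 1 by rewrite leNgt supercrit.
rewrite -[leRHS]p_sum1; apply: ler_sum => B _.
have [pB_gt0 | pB_le0] := ltrP 0 (p B).
  have cardB : (#|B| <= 1)%N.
    by rewrite leqNgt; apply/negP => cardB; apply: no_B0; exists B.
  by rewrite -[leRHS]mulr1 ler_wpM2l // lern1.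
by have -> : p B = 0 by apply/eqP; rewrite eq_le pB_le0 p_ge0.
Qed.

Section NondecreasingUnions.
Variables (d : measure_display) (T : measurableType d) (R : realType).
Variable mu : {measure set T -> \bar R}.

Lemma measure_nondecreasing_bigcup_le (F : nat -> set T) (b : \bar R) :
  (forall N, measurable (F N)) -> nondecreasing_seq F ->
  (forall N, (mu (F N) <= b)%E) -> (mu (\bigcup_N F N) <= b)%E.
Proof.
move=> mF ndF Fb.
have cvgF := nondecreasing_cvg_mu (mu := mu) mF (bigcupT_measurable _ mF) ndF.
rewrite -(cvg_lim _ cvgF) //; apply: lime_le.
  by apply/cvg_ex; exists (mu (\bigcup_N F N)).
by near=> N; apply: Fb.
Unshelve. all: by end_near.
Qed.

Lemma measure_bigcap_bigcup_eq0 (E : nat -> nat -> set T) (b : nat -> R) :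
  (forall k N, measurable (E k N)) -> (forall k, nondecreasing_seq (E k)) ->
  (forall k N, (mu (E k N) <= (b k)%:E)%E) ->
  (forall M, (forall k, M <= b k) -> M <= 0) ->
  mu (\bigcap_k \bigcup_N E k N) = 0.
Proof.
move=> mE ndE Eb b_vanish.
have mU k : measurable (\bigcup_N E k N) := bigcupT_measurable _ (mE k).
have Zb k : (mu (\bigcap_k \bigcup_N E k N) <= (b k)%:E)%E.
  apply: le_trans (measure_nondecreasing_bigcup_le (mE k) (ndE k) (Eb k)).
  by apply: le_measure; rewrite ?inE //; [exact: bigcapT_measurable | move=> om; apply].
have Z_fin : mu (\bigcap_k \bigcup_N E k N) \is a fin_num.
  by rewrite ge0_fin_numE ?measure_ge0 // (le_lt_trans (Zb 0%N)) ?ltey.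
apply/eqP; rewrite eq_le measure_ge0 andbT -(fineK Z_fin) lee_fin.
by apply: b_vanish => k; rewrite -lee_fin fineK.
Qed.

End NondecreasingUnions.

Theorem corollary2p12
  (R : realType) (d : measure_display) (Omega : measurableType d)
  (P : probability Omega R) (A : finType)
  (p : {set A} -> R) (W : seq A -> Omega -> {set A})
  (calA : {set {set A}})
  (* each offspring set W v is a random variable *)
  (W_meas : forall v B, measurable [set om | W v om = B])
  (* the W v are i.i.d. with law p *)
  (W_iid : forall (vs : seq (seq A)) (Bs : seq A -> {set A}), uniq vs ->
      P (\big[setI/setT]_(v <- vs) [set om | W v om = Bs v])
      = ((\prod_(v <- vs) p (Bs v))%:E))
  (* P(i \in W) > 0 for every i *)
  (p_pos : forall i : A, 0 < \sum_(B : {set A} | i \in B) p B)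
  (* supercritical: E|W| > 1 *)
  (supercrit : 1 < \sum_(B : {set A}) p B * (#|B|%:R))
  (calA_ne : calA != finset.set0)
  (calA_elts_ne : (finset.set0 : {set A}) \notin calA)
  (fixpt : exists s : R, 0 <= s < 1 /\ gA p calA s = s) :
  P.-negligible
    ([set om | nonextinct W om] `&`
     ~` [set om | infinite_set
                   [set v | GW_tree W om v /\
                            exists S', is_Asubtree calA (subtree_at (GW_tree W om) v) S']]).
Proof.
have p_ge0 := offspring_law_ge0 W_iid.
have p_sum1 := offspring_law_sum1 W_meas W_iid.
case: fixpt => s [/andP [s0 s1] gs].
have [B0 pB0 cardB0] := supercritical_offspring_set p_ge0 p_sum1 supercrit.
have pgf_s : pgf p s <= s by rewrite -[leRHS]gs pgf_le_gA // ltW.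
pose E k N := [set om | bad_generation calA N k (conf_at W om [::] (k + N))].
have E_law k N := P_conf_at_pred W_meas W_iid (bad_generation calA N k).
have mE k N : measurable (E k N) by case: (E_law k N).
exists (\bigcap_k \bigcup_N E k N); split.
- by apply: bigcapT_measurable => k; apply: bigcupT_measurable.
- apply: (measure_bigcap_bigcup_eq0 (b := fun k => iter k (pgf p) s - iter k (pgf p) 0)).
  + exact: mE.
  + move=> k; apply/nondecreasing_seqP => N; rewrite subsetEset => om.
    exact: bad_generation_conf_atS.
  + move=> k N; case: (E_law k N) => _; rewrite /E /= => ->.
    by rewrite lee_fin mass_bad_generation.
  + by move=> M; apply: (iter_pgf_gap_vanish p_ge0 p_sum1 pB0 cardB0 s0 s1 pgf_s).
- move=> om [/= nonext fin] k _.
  by have [N bad] := bad_generation_of_finitely_many_Asubtrees calA_elts_ne nonext fin k; exists N.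
Qed.
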